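(* Let $c\in(0,1)$ and $C\ge1$ be constants such that for all $n\ge1$, all integers $0\le w\le cn$ and all integers $0\le i\le n/2$, one has $|K^{(n)}_w(i)|\le C\binom nw\left(1-\frac{2w}{n}\right)^i$. Let $\mathcal{C}\subseteq\mathbb{F}_2^n$ be a binary linear code with $\mathcal{C}^\perp\neq\{0\}$, and let $d^\perp<n/2$ be the dual distance of $\mathcal{C}$ (the minimum Hamming weight of a nonzero vector of $\mathcal{C}^\perp$); put $t^\perp=\lfloor(d^\perp-1)/2\rfloor$. Let $w$ be an integer with $0\le w\le cn$, let $\varepsilon>0$, and let $\rho$ be a pmf on $\mathbb{F}_2^n$ satisfying $d_{TV}(P_{\mathcal{C}^\perp}\ast\rho,P_{U_n})\le\varepsilon$. Then $$\frac{1}{\binom nw}\sum_{x:|x|=w}2^n\hat\rho(x)\le\frac{|\mathcal{C}^\perp|V_n(t^\perp)}{2^{n-1}}+Cn\left(1-\frac{2w}{n}\right)^{t^\perp}+2\varepsilon.$$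
   Context: Krawtchouk polynomial: $K^{(n)}_w(i)=\sum_{j=0}^w(-1)^j\binom ij\binom{n-i}{w-j}$. The Fourier transform of $f:\mathbb{F}_2^n\to\mathbb{R}$ is $\hat f(y)=2^{-n}\sum_{x\in\mathbb{F}_2^n}f(x)(-1)^{x^\intercal y}$. $|x|$ is Hamming weight; $P_{\mathcal{C}^\perp}$ is the uniform pmf on the dual code $\mathcal{C}^\perp$; $P_{U_n}$ is uniform on $\mathbb{F}_2^n$; $(f\ast g)(x)=\sum_y f(y)g(x-y)$; $V_n(t)=\sum_{j=0}^t\binom nj$; $d_{TV}(P,Q)=\frac12\sum_x|P(x)-Q(x)|$. *)

From mathcomp Require Import all_boot all_order all_algebra.
Set Implicit Arguments. Unset Strict Implicit. Unset Printing Implicit Defensive.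
Import Order.TTheory GRing.Theory Num.Theory.
Local Open Scope ring_scope.

Definition vec (n : nat) := {ffun 'I_n -> bool}.
Definition vzero (n : nat) : vec n := [ffun=> false].
Definition vadd (n : nat) (x y : vec n) : vec n := [ffun i => x i (+) y i].
Definition wt (n : nat) (x : vec n) : nat := #|[set i | x i]|.
Definition dot (n : nat) (x y : vec n) : bool := odd #|[set i | x i && y i]|.

Definition is_linear_code (n : nat) (C : {set vec n}) : Prop :=
  vzero n \in C /\ forall x y, x \in C -> y \in C -> vadd x y \in C.

Definition dual_code (n : nat) (C : {set vec n}) : {set vec n} :=
  [set y | [forall x in C, ~~ dot x y]].

Definition dual_distance (n : nat) (C : {set vec n}) : nat :=
  \big[minn/n.+1]_(y in dual_code C | y != vzero n) wt y.

Definition kraw (R : numDomainType) (n w i : nat) : R :=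
  \sum_(j < w.+1) (-1) ^+ j * ('C(i, j))%:R * ('C(n - i, w - j))%:R.

Definition fourier (R : fieldType) (n : nat) (f : vec n -> R) (y : vec n) : R :=
  (2 ^+ n)^-1 * \sum_(x : vec n) f x * (-1) ^+ dot x y.

Definition is_pmf (R : numDomainType) (n : nat) (p : vec n -> R) : Prop :=
  (forall x, 0 <= p x) /\ \sum_(x : vec n) p x = 1.

Definition unif_on (R : fieldType) (n : nat) (A : {set vec n}) (x : vec n) : R :=
  (if x \in A then 1 else 0) / (#|A|)%:R.

Definition unif_all (R : fieldType) (n : nat) (x : vec n) : R := (2 ^+ n)^-1.

Definition conv (R : pzRingType) (n : nat) (f g : vec n -> R) (x : vec n) : R :=
  \sum_(y : vec n) f y * g (vadd x y).

Definition dTV (R : numFieldType) (n : nat) (P Q : vec n -> R) : R :=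
  2^-1 * \sum_(x : vec n) `|P x - Q x|.

Definition hamball (n t : nat) : nat := \sum_(j < t.+1) 'C(n, j).

From mathcomp Require Import all_boot all_order all_algebra.
From mathcomp Require Import ring lra zify.
Set Implicit Arguments. Unset Strict Implicit. Unset Printing Implicit Defensive.
Import Order.TTheory GRing.Theory Num.Theory.
Local Open Scope ring_scope.

(* Since [2^n rho^(x) = \sum_z rho(z) (-1)^(x.z)], the left-hand side is the
   average [\sum_z rho(z) K_w(|z|) / 'C(n, w)].  Split the [z] according to
   whether they lie within distance [t] of [D = C^perp] or of [D + 1].  This set
   is a union of cosets of [D], so its [rho]-mass equals its mass under
   [P_D * rho], which is within [2 eps] of its uniform mass
   [<= 2 |D| V_n(t) / 2^n]; there [|K_w| <= 'C(n, w)] suffices.  Off this set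
   both [|z|] and [n - |z|] exceed [t], and [K_w(n - i) = +-K_w(i)], so the decay
   hypothesis applies with exponent at least [t].  The argument works for any
   [t]: the dual distance only enters through its value. *)

Lemma card_set_sum_nat (T : finType) (P : pred T) :
  #|[set i | P i]| = (\sum_i (P i : nat))%N.
Proof. by rewrite -sum1dep_card big_mkcond; apply: eq_bigr => i _; case: (P i). Qed.

Section BinaryVectors.

Variable n : nat.
Implicit Types x y z : vec n.

Definition ones : vec n := [ffun=> true].

Lemma vaddA x y z : vadd x (vadd y z) = vadd (vadd x y) z.
Proof. by apply/ffunP => i; rewrite !ffunE addbA. Qed.

Lemma vaddK y : cancel (@vadd n ^~ y) (@vadd n ^~ y).
Proof. by move=> x; apply/ffunP => i; rewrite !ffunE addbK. Qed.

Lemma vaddI y : injective (@vadd n ^~ y).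
Proof. exact: can_inj (vaddK y). Qed.

Lemma vaddx0 x : vadd x (vzero n) = x.
Proof. by apply/ffunP => i; rewrite !ffunE addbF. Qed.

Lemma dotE x y : dot x y = \big[addb/false]_i (x i && y i).
Proof.
rewrite /dot card_set_sum_nat (big_morph odd oddD (erefl _)).
by apply: eq_bigr => i _; case: (x i && y i).
Qed.

Lemma dotC x y : dot x y = dot y x.
Proof. by rewrite !dotE; apply: eq_bigr => i _; rewrite andbC. Qed.

Lemma dotDl x y z : dot (vadd x y) z = dot x z (+) dot y z.
Proof.
rewrite !dotE -big_split /=; apply: eq_bigr => i _; rewrite ffunE.
by case: (x i); case: (y i); case: (z i).
Qed.

Lemma dotDr x y z : dot z (vadd x y) = dot z x (+) dot z y.
Proof. by rewrite !(dotC z) dotDl. Qed.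

Lemma dot0l x : dot (vzero n) x = false.
Proof. by rewrite dotE big1 // => i _; rewrite ffunE. Qed.

Lemma dot0r x : dot x (vzero n) = false.
Proof. by rewrite dotC dot0l. Qed.

Lemma dot_onesl x : dot ones x = odd (wt x).
Proof. by congr odd; apply: eq_card => i; rewrite !inE ffunE. Qed.

Lemma wt_le_n x : (wt x <= n)%N.
Proof. by rewrite /wt -[X in (_ <= X)%N]card_ord max_card. Qed.

Lemma wt0 : wt (vzero n) = 0%N.
Proof. by apply: eq_card0 => i; rewrite inE ffunE. Qed.

Lemma wt_vadd_ones x : wt (vadd x ones) = (n - wt x)%N.
Proof.
have /(congr1 (subn^~ (wt x))) : (wt x + #|[predC [set i | x i]]|)%N = n.
  by rewrite cardC card_ord.
by rewrite addKn => <-; apply: eq_card => i; rewrite !inE !ffunE addbT.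
Qed.

Lemma dual_code0 (C : {set vec n}) : vzero n \in dual_code C.
Proof. by rewrite inE; apply/forall_inP => x _; rewrite dot0r. Qed.

Lemma dual_codeD (C : {set vec n}) y z :
  y \in dual_code C -> z \in dual_code C -> vadd y z \in dual_code C.
Proof.
rewrite !inE => /forall_inP Cy /forall_inP Cz; apply/forall_inP => x Cx.
by rewrite dotDr (negbTE (Cy x Cx)) (negbTE (Cz x Cx)).
Qed.

End BinaryVectors.

Lemma coef_1DZX_exp (R : comNzRingType) (a : R) (m j : nat) :
  ((1 + a *: 'X) ^+ m)`_j = a ^+ j *+ 'C(m, j).
Proof.
rewrite exprDn.
under eq_bigr do rewrite expr1n mul1r exprZn scalerMnl.
rewrite coef_sumMXn; case: (ltnP j m.+1) => [lt_jm | le_mj].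
  by rewrite (big_pred1 (Ordinal lt_jm)).
rewrite big_pred0 ?bin_small ?mulr0n // => i /=.
by apply/negbTE; rewrite neq_ltn (leq_trans (ltn_ord i) le_mj).
Qed.

Lemma sum_sign_dot_XwtE (R : comNzRingType) n (y : vec n) :
  \sum_(x : vec n) (-1) ^+ dot y x *: 'X^(wt x)
  = \prod_(i < n) (1 + (-1) ^+ y i *: 'X) :> {poly R}.
Proof.
pose G (i : 'I_n) (b : bool) : {poly R} := if b then (-1) ^+ y i *: 'X else 1.
rewrite (eq_bigr (fun i => \sum_b G i b)); last by move=> i _; rewrite big_bool addrC.
rewrite bigA_distr_bigA /=; apply: eq_bigr => x _.
rewrite (eq_bigr (fun i => ((-1) ^+ (y i && x i))%:P * 'X^(x i))); last first.
  move=> i _; rewrite /G; case: (x i); rewrite ?andbT ?andbF.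
    by rewrite mul_polyC expr1.
  by rewrite expr0 mulr1 polyC1.
rewrite big_split /= -rmorph_prod !prodrXr mul_polyC.
by rewrite /dot /wt !card_set_sum_nat signr_odd.
Qed.

Lemma sum_sphere_sign_dot (R : numDomainType) n w (y : vec n) :
  \sum_(x : vec n | wt x == w) (-1) ^+ dot y x = kraw R n w (wt y).
Proof.
have := congr1 (fun p : {poly R} => p`_w) (sum_sign_dot_XwtE R y).
rewrite /= coef_sumMXn => ->.
rewrite (bigID (fun i => y i)) /=.
rewrite (eq_bigr (fun _ => 1 + (-1) *: 'X)); last by move=> i ->.
rewrite [X in _ * X](eq_bigr (fun _ => 1 + 1 *: 'X)); last by move=> i /negbTE ->.
rewrite !prodr_const.
have -> : #|(fun i => y i)| = wt y by apply: eq_card => i; rewrite inE.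
have -> : #|(fun i => ~~ y i)| = (n - wt y)%N.
  by rewrite -wt_vadd_ones; apply: eq_card => i; rewrite inE !ffunE addbT.
rewrite coefM /kraw; apply: eq_bigr => j _.
by rewrite !coef_1DZX_exp expr1n -mulr_natr.
Qed.

Lemma kraw0 (R : numDomainType) n w : kraw R n w 0 = ('C(n, w))%:R.
Proof.
rewrite /kraw big_ord_recl big1 => [|i _]; last by rewrite bin0n mulr0 mul0r.
by rewrite addr0 bin0 !mul1r !subn0.
Qed.

Lemma sum_sphere1 (R : numDomainType) n w :
  \sum_(x : vec n | wt x == w) (1 : R) = ('C(n, w))%:R.
Proof.
rewrite -(kraw0 R n w) -(wt0 n) -sum_sphere_sign_dot.
by apply: eq_bigr => x _; rewrite dot0l.
Qed.

Lemma sum_ball1 (R : numDomainType) n t (d : vec n) :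
  \sum_(x : vec n | (wt (vadd x d) <= t)%N) (1 : R) = (hamball n t)%:R.
Proof.
rewrite (reindex_inj (@vaddI n d)) /=.
under eq_bigl do rewrite vaddK.
rewrite (partition_big (fun x : vec n => inord (wt x) : 'I_t.+1) predT) //=.
rewrite /hamball natr_sum; apply: eq_bigr => j _.
rewrite -sum_sphere1; apply: eq_bigl => x; apply/andP/eqP => [[le_xt /eqP <-] | wt_x].
  by rewrite inordK.
by rewrite wt_x -ltnS ltn_ord; split=> //; apply/eqP/val_inj; rewrite /= inordK.
Qed.

Lemma normr_kraw_wt_le (R : numDomainType) n w (z : vec n) :
  `|kraw R n w (wt z)| <= ('C(n, w))%:R.
Proof.
rewrite -sum_sphere_sign_dot -sum_sphere1; apply: le_trans (ler_norm_sum _ _ _) _.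
by apply: ler_sum => x _; rewrite normrX normrN1 expr1n.
Qed.

Lemma normr_kraw_wt_vadd_ones (R : numDomainType) n w (z : vec n) :
  `|kraw R n w (wt (vadd z (ones n)))| = `|kraw R n w (wt z)|.
Proof.
rewrite -!sum_sphere_sign_dot (eq_bigr (fun x => (-1) ^+ w * (-1) ^+ dot z x)).
  by rewrite -mulr_sumr normrM normrX normrN1 expr1n mul1r.
by move=> x /eqP wt_x; rewrite dotDl dot_onesl signr_addb wt_x signr_odd mulrC.
Qed.

Lemma sum_sphere_fourier (R : numFieldType) n w (rho : vec n -> R) :
  \sum_(x : vec n | wt x == w) 2 ^+ n * fourier rho x
  = \sum_(z : vec n) rho z * kraw R n w (wt z).
Proof.
under eq_bigr do rewrite /fourier mulrA mulfV ?mul1r ?expf_neq0 ?pnatr_eq0 //.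
rewrite exchange_big /=; apply: eq_bigr => z _.
by rewrite -sum_sphere_sign_dot mulr_sumr; apply: eq_bigr => x _; rewrite dotC.
Qed.

Lemma sum_conv_unif_invariant (R : numFieldType) n (D : {set vec n})
    (A : pred (vec n)) (rho : vec n -> R) :
  vzero n \in D -> (forall x y, y \in D -> A (vadd x y) = A x) ->
  \sum_(x | A x) conv (unif_on R D) rho x = \sum_(x | A x) rho x.
Proof.
move=> D0 A_inv; rewrite /conv exchange_big /=.
transitivity (\sum_y unif_on R D y * \sum_(x | A x) rho x).
  apply: eq_bigr => y _; rewrite -mulr_sumr.
  have [Dy | /negbTE nDy] := boolP (y \in D); last by rewrite /unif_on nDy !mul0r.
  congr (_ * _); rewrite [RHS](reindex_inj (@vaddI n y)) /=.
  by apply: eq_bigl => x; rewrite A_inv.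
rewrite -mulr_suml -[RHS]mul1r; congr (_ * _).
rewrite /unif_on -mulr_suml -big_mkcond /= sumr_const divff //.
by rewrite pnatr_eq0 -lt0n; apply/card_gt0P; exists (vzero n).
Qed.

Lemma sum_sub_le_2dTV (R : realFieldType) n (A : pred (vec n)) (P Q : vec n -> R) :
  \sum_(x | A x) P x - \sum_(x | A x) Q x <= 2 * dTV P Q.
Proof.
rewrite /dTV mulrA mulfV ?mul1r ?pnatr_eq0 // -sumrB.
apply: le_trans (ler_sum _ (fun x _ => ler_norm (P x - Q x))) _.
by rewrite [X in _ <= X](bigID A) /= lerDl sumr_ge0.
Qed.

Definition near_code n t (D : {set vec n}) : pred (vec n) :=
  [pred x | [exists e in D,
     (wt (vadd x e) <= t)%N || (wt (vadd (vadd x e) (ones n)) <= t)%N]].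

Section NearCode.

Variables (n t : nat) (D : {set vec n}).
Hypothesis D0 : vzero n \in D.
Hypothesis DD : forall y z, y \in D -> z \in D -> vadd y z \in D.

Lemma near_code_vadd x y : y \in D -> near_code t D (vadd x y) = near_code t D x.
Proof.
have near_vadd x' y' : y' \in D -> near_code t D x' -> near_code t D (vadd x' y').
  move=> Dy /exists_inP [e De near_e]; apply/exists_inP; exists (vadd y' e).
    exact: DD.
  by rewrite vaddA vaddK.
move=> Dy; apply/idP/idP; last exact: near_vadd.
by move/(near_vadd _ _ Dy); rewrite vaddK.
Qed.

Lemma far_from_code x :
  ~~ near_code t D x -> (t < wt x)%N && (t < wt (vadd x (ones n)))%N.
Proof.
apply: contraR; rewrite negb_and -!leqNgt => near_0.
by apply/exists_inP; exists (vzero n); rewrite ?vaddx0.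
Qed.

Lemma sum_near_code1_le (R : numDomainType) :
  \sum_(x | near_code t D x) (1 : R) <= (#|D|)%:R * 2 * (hamball n t)%:R.
Proof.
pose g (x e : vec n) : R :=
  ((wt (vadd x e) <= t)%N)%:R + ((wt (vadd (vadd x e) (ones n)) <= t)%N)%:R.
have g_ge0 x e : 0 <= g x e by rewrite addr_ge0.
apply: (@le_trans _ _ (\sum_x \sum_(e in D) g x e)).
  rewrite big_mkcond /=; apply: ler_sum => x _.
  case: ifP => [/exists_inP [e De near_e] | _]; last exact: sumr_ge0.
  rewrite (bigD1 e) //= -[X in X <= _]addr0 lerD ?sumr_ge0 //.
  by rewrite /g; case/orP: near_e => ->; rewrite ?lerDl ?lerDr.
rewrite exchange_big /= -mulrA [#|D|%:R * _]mulr_natl -sumr_const.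
apply: ler_sum => e _; rewrite big_split /=.
have sum_indicator (P : pred (vec n)) : \sum_x (P x)%:R = \sum_(x | P x) (1 : R).
  by rewrite [RHS]big_mkcond; apply: eq_bigr => x _; case: (P x).
rewrite !sum_indicator sum_ball1; under eq_bigl do rewrite -vaddA.
by rewrite sum_ball1 mulrDl mul1r.
Qed.

Lemma sum_near_code_le (R : realFieldType) (rho : vec n -> R) : (0 < n)%N ->
  \sum_(x | near_code t D x) rho x
  <= (#|D|)%:R * (hamball n t)%:R / 2 ^+ n.-1
     + 2 * dTV (conv (unif_on R D) rho) (@unif_all R n).
Proof.
move=> n_gt0.
have tv := sum_sub_le_2dTV (near_code t D) (conv (unif_on R D) rho) (@unif_all R n).
have unif_le : \sum_(x | near_code t D x) unif_all R x
               <= (#|D|)%:R * (hamball n t)%:R / 2 ^+ n.-1.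
  have -> : (#|D|)%:R * (hamball n t)%:R / 2 ^+ n.-1
            = (2 ^+ n)^-1 * ((#|D|)%:R * 2 * (hamball n t)%:R) :> R.
    have -> : 2 ^+ n = 2 * 2 ^+ n.-1 :> R by rewrite -exprS prednK.
    field.
    by rewrite expf_neq0 // pnatr_eq0.
  rewrite (eq_bigr (fun=> (2 ^+ n)^-1 * 1)) => [|x _]; last by rewrite mulr1.
  by rewrite -mulr_sumr ler_wpM2l ?invr_ge0 ?exprn_ge0 // sum_near_code1_le.
rewrite -(sum_conv_unif_invariant rho D0 near_code_vadd); lra.
Qed.

End NearCode.

Lemma sum_kraw_avg_le_mass (R : realFieldType) n w (A : pred (vec n))
    (rho : vec n -> R) :
  (w <= n)%N -> (forall z, 0 <= rho z) ->
  \sum_(z | A z) rho z * (kraw R n w (wt z) / ('C(n, w))%:R)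
  <= \sum_(z | A z) rho z.
Proof.
move=> le_wn rho_ge0; apply: ler_sum => z _.
rewrite -[leRHS]mulr1 ler_wpM2l // ler_pdivrMr ?ltr0n ?bin_gt0 // mul1r.
exact: le_trans (ler_norm _) (normr_kraw_wt_le _ _ _).
Qed.

Section KrawtchoukDecay.

Variables (R : realFieldType) (c C0 : R).
Hypotheses (c_lt1 : c < 1) (C0_ge1 : 1 <= C0).
Hypothesis kraw_decay : forall (n w i : nat), (1 <= n)%N -> w%:R <= c * n%:R ->
  (i.*2 <= n)%N ->
  `|kraw R n w i| <= C0 * ('C(n, w))%:R * (1 - 2 * w%:R / n%:R) ^+ i.

Variables (n w : nat).
Hypotheses (n_gt0 : (0 < n)%N) (w_le_cn : w%:R <= c * n%:R).

Local Notation b := (1 - 2 * w%:R / n%:R : R).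

Lemma w_lt_n : (w < n)%N.
Proof.
rewrite -(ltr_nat R); apply: le_lt_trans w_le_cn _.
by rewrite gtr_pMl ?ltr0n.
Qed.

Lemma C0_bin_gt0 : 0 < C0 * ('C(n, w))%:R.
Proof.
by rewrite mulr_gt0 ?ltr0n ?bin_gt0 ?(ltnW w_lt_n) // (lt_le_trans ltr01 C0_ge1).
Qed.

(* The hypothesis at [i = 1] bounds a norm by [C0 * 'C(n, w) * b], so [b >= 0]. *)
Lemma decay_base_ge0 : 0 <= b.
Proof.
have [->|w_gt0] := posnP w; first by rewrite mulr0 mul0r subr0.
have n_ge2 : (1.*2 <= n)%N by apply: leq_trans w_lt_n.
have := kraw_decay n_gt0 w_le_cn n_ge2; rewrite expr1.
by move/(le_trans (normr_ge0 _)); rewrite pmulr_rge0 // C0_bin_gt0.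
Qed.

Lemma decay_base_le1 : b <= 1.
Proof. by rewrite lerBlDr lerDl divr_ge0 ?mulr_ge0. Qed.

Lemma normr_kraw_far_le t (z : vec n) :
  (t < wt z)%N -> (t < wt (vadd z (ones n)))%N ->
  `|kraw R n w (wt z)| <= C0 * ('C(n, w))%:R * b ^+ t.
Proof.
move=> t_lt_z t_lt_zc.
have decay_t i : (t < i)%N -> (i.*2 <= n)%N ->
    `|kraw R n w i| <= C0 * ('C(n, w))%:R * b ^+ t.
  move=> t_lt_i le_2i_n; apply: le_trans (kraw_decay n_gt0 w_le_cn le_2i_n) _.
  rewrite ler_wpM2l ?(ltW C0_bin_gt0) //.
  exact: ler_wiXn2l decay_base_ge0 decay_base_le1 _ _ (ltnW t_lt_i).
have [le_2z_n | lt_n_2z] := leqP (wt z).*2 n; first exact: decay_t.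
rewrite -normr_kraw_wt_vadd_ones decay_t // wt_vadd_ones.
have := wt_le_n z; rewrite -!addnn in lt_n_2z *; lia.
Qed.

Lemma sum_kraw_avg_far_le t (A : pred (vec n)) (rho : vec n -> R) :
  is_pmf rho -> (forall z, ~~ A z -> (t < wt z)%N && (t < wt (vadd z (ones n)))%N) ->
  \sum_(z | ~~ A z) rho z * (kraw R n w (wt z) / ('C(n, w))%:R) <= C0 * b ^+ t.
Proof.
move=> [rho_ge0 rho1] far_A.
have bin_gt0 : 0 < ('C(n, w))%:R :> R by rewrite ltr0n bin_gt0 ltnW ?w_lt_n.
apply: (@le_trans _ _ (\sum_(z | ~~ A z) rho z * (C0 * b ^+ t))).
  apply: ler_sum => z /far_A /andP [t_lt_z t_lt_zc].
  rewrite ler_wpM2l // ler_pdivrMr // mulrAC.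
  exact: le_trans (ler_norm _) (normr_kraw_far_le t_lt_z t_lt_zc).
rewrite -mulr_suml ler_piMl ?mulr_ge0 ?exprn_ge0 ?decay_base_ge0 //.
  exact: le_trans ler01 C0_ge1.
by rewrite -rho1 [leRHS](bigID A) /= lerDr sumr_ge0.
Qed.

End KrawtchoukDecay.

Theorem mainTheorem3 (R : realFieldType) (c C0 : R) :
  0 < c -> c < 1 -> 1 <= C0 ->
  (forall (n w i : nat), (1 <= n)%N -> w%:R <= c * n%:R -> (i.*2 <= n)%N ->
     `|kraw R n w i| <= C0 * ('C(n, w))%:R * (1 - 2 * w%:R / n%:R) ^+ i) ->
  forall (n : nat) (C : {set vec n}),
  is_linear_code C ->
  dual_code C != [set vzero n] ->
  forall d : nat, d = dual_distance C -> (d.*2 < n)%N ->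
  let t := (d.-1)./2 in
  forall (w : nat) (eps : R) (rho : vec n -> R),
  w%:R <= c * n%:R -> 0 < eps ->
  is_pmf rho ->
  dTV (conv (unif_on R (dual_code C)) rho) (@unif_all R n) <= eps ->
  (('C(n, w))%:R)^-1 * \sum_(x : vec n | wt x == w) 2 ^+ n * fourier rho x
    <= (#|dual_code C|)%:R * (hamball n t)%:R / 2 ^+ n.-1
       + C0 * n%:R * (1 - 2 * w%:R / n%:R) ^+ t + 2 * eps.
Proof.
move=> _ c_lt1 C0_ge1 decay n C _ _ d _ lt_2d_n t w eps rho w_le_cn _ pmf_rho tv.
have n_gt0 : (0 < n)%N := leq_ltn_trans (leq0n _) lt_2d_n.
set D := dual_code C.
have D0 : vzero n \in D := dual_code0 C.
have DD := @dual_codeD n C.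
rewrite sum_sphere_fourier mulr_sumr.
under eq_bigr do rewrite mulrCA [_^-1 * _]mulrC.
rewrite (bigID (near_code t D)) /=.
have near := sum_kraw_avg_le_mass (near_code t D) (ltnW (w_lt_n c_lt1 n_gt0 w_le_cn))
  pmf_rho.1.
have near_mass := sum_near_code_le t D0 DD rho n_gt0.
have far := sum_kraw_avg_far_le c_lt1 C0_ge1 decay n_gt0 w_le_cn pmf_rho
  (@far_from_code n t D D0).
have far_le : C0 * (1 - 2 * w%:R / n%:R) ^+ t
              <= C0 * n%:R * (1 - 2 * w%:R / n%:R) ^+ t.
  rewrite -[leRHS]mulrA ler_pM2l ?(lt_le_trans ltr01 C0_ge1) //.
  by rewrite ler_peMl ?exprn_ge0 ?(decay_base_ge0 c_lt1 C0_ge1 decay n_gt0) // ler1n.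
lra.
Qed.
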